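(* Let $\mathcal{P}=\langle P,\le\rangle$ be a finite bounded poset with $|P|\ge 2$ and height $H$. Let $R^+(a)=[H(\uparrow a)-1,\;H-H(\downarrow a)]$ and $R^{+}_{c}(a)=[H(\uparrow a)-1,\;H+H(\downarrow a)-2]$ for $a\in P$. Let $R^+(\mathcal{P})$ be the set $\{R^+(a):a\in P\}$ ordered by $\ge_W$, and $R^{+}_{c}(\mathcal{P})$ the set $\{R^{+}_{c}(a):a\in P\}$ ordered by $\subseteq$. Then $R^+(\mathcal{P})\cong R^{+}_{c}(\mathcal{P})$ as posets; explicitly, $[x,y]\mapsto[x,2(H-1)-y]$ is an order isomorphism.
   Context: A poset is bounded if it has a least and a greatest element. The height of a finite poset is the number of elements in its largest chain. For $a\in P$, $\uparrow a=\{b:b\ge a\}$ and $\downarrow a=\{b:b\le a\}$ as subposets, with heights $H(\uparrow a),H(\downarrow a)$. Weak order on intervals: $[x_*,x^*]\le_W[y_*,y^*]$ iff $x_*\le y_*$ and $x^*\le y^*$; $\ge_W$ is its dual. Subset order: $[x_*,x^*]\subseteq[y_*,y^*]$ iff $x_*\ge y_*$ and $x^*\le y^*$. *)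

From HB Require Import structures.
From mathcomp Require Import all_boot all_order all_algebra.
Set Implicit Arguments. Unset Strict Implicit. Unset Printing Implicit Defensive.
Import Order.TTheory GRing.Theory Num.Theory.

Section Defs.
Context {disp : Order.disp_t} {T : finPOrderType disp}.

Definition is_chain (S : {set T}) : bool :=
  [forall x in S, forall y in S, (x <= y)%O || (y <= x)%O].

Definition height (A : {set T}) : nat :=
  \max_(S : {set T} | (S \subset A) && is_chain S) #|S|.

Definition upset (a : T) : {set T} := [set b | (a <= b)%O].
Definition downset (a : T) : {set T} := [set b | (b <= a)%O].

Definition Hgt : nat := height [set: T].

Definition Rplus (a : T) : int * int :=
  ((height (upset a))%:Z - 1, (Hgt%:Z - (height (downset a))%:Z))%R.

Definition Rplusc (a : T) : int * int :=
  ((height (upset a))%:Z - 1, Hgt%:Z + (height (downset a))%:Z - 2)%R.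

Definition Rphi (u : int * int) : int * int :=
  (u.1, 2 * (Hgt%:Z - 1) - u.2)%R.
End Defs.
Arguments Hgt {disp} T.
Arguments Rphi {disp} T u.


Definition leW (u v : int * int) : Prop := (u.1 <= v.1)%R /\ (u.2 <= v.2)%R.
Definition geW (u v : int * int) : Prop := leW v u.
Definition subI (u v : int * int) : Prop := (v.1 <= u.1)%R /\ (u.2 <= v.2)%R.

From HB Require Import structures.
From mathcomp Require Import all_boot all_order all_algebra ring.
Import Order.TTheory GRing.Theory Num.Theory.

(* The map [Rphi] is the reflection y |-> 2(H-1) - y of the upper endpoint: it
   is an involution of int * int, sends R^+(a) to R^+_c(a) because
   2(H-1) - (H - H(down a)) = H + H(down a) - 2, and it turns the weak order
   >=_W into inclusion since it reverses the order on upper endpoints. *)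

Section Reflection.
Context {disp : Order.disp_t} {T : finPOrderType disp}.
Local Open Scope ring_scope.

Lemma RphiK : involutive (Rphi T).
Proof. by case=> x y; rewrite /Rphi /= opprB addrC subrK. Qed.

Lemma Rphi_inj : injective (Rphi T).
Proof. exact: inv_inj RphiK. Qed.

Lemma Rphi_Rplus (a : T) : Rphi T (Rplus a) = Rplusc a.
Proof. rewrite /Rphi /Rplus /Rplusc /=; congr pair; ring. Qed.

Lemma geW_subI_Rphi (u v : int * int) :
  geW u v <-> subI (Rphi T u) (Rphi T v).
Proof. by rewrite /geW /leW /subI /Rphi /= lerD2l lerN2. Qed.

End Reflection.

Theorem proposition4 (disp : Order.disp_t) (T : finPOrderType disp)
  (hbot : exists b : T, forall x : T, (b <= x)%O)
  (htop : exists t : T, forall x : T, (x <= t)%O)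
  (hcard : 1 < #|T|) :
  (forall u, (exists a : T, u = Rplus a) -> exists b : T, Rphi T u = Rplusc b) /\
  (forall v, (exists b : T, v = Rplusc b) ->
     exists u, (exists a : T, u = Rplus a) /\ Rphi T u = v) /\
  (forall u v, (exists a : T, u = Rplus a) -> (exists b : T, v = Rplus b) ->
     Rphi T u = Rphi T v -> u = v) /\
  (forall u v, (exists a : T, u = Rplus a) -> (exists b : T, v = Rplus b) ->
     (geW u v <-> subI (Rphi T u) (Rphi T v))).
Proof.
split; first by move=> _ [a ->]; exists a; exact: Rphi_Rplus.
split; first by move=> _ [b ->]; exists (Rplus b); split; [exists b | exact: Rphi_Rplus].
split; first by move=> u v _ _; exact: Rphi_inj.
by move=> u v _ _; exact: geW_subI_Rphi.
Qed.
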